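(* Let $G=(V,E)$ be a transport graph with $n$ nodes and $m$ edges, incidence matrix $A\in\mathbb{R}^{m\times n}$, and positive node weights $g\in\mathbb{R}^n$. Let $F\in\mathbb{R}^m$ be a flow satisfying the capacity constraint $\sqrt{|A^T|F^2}\le g$, and let $u\in\mathbb{R}^n$. Then $$F^TAu\le g^T\sqrt{|A^T|(Au)^2}.$$
   Context: A transport graph is a graph with a distinguished source node $s$ and sink node $t$ together with edges linking some nodes to the source and some to the sink; $n$ and $m$ include these nodes and edges. Each edge $e_{ij}$ is oriented from $v_i$ to $v_j$; a flow is a vector $F\in\mathbb{R}^m$ indexed by edges. The incidence matrix $A$ has $A_{e_{ij},v_k}=+1$ if $k=i$, $-1$ if $k=j$, $0$ otherwise, so $(Au)_{e_{ij}}=u_i-u_j$; $|A|$ is the entrywise absolute value of $A$. For vectors, $v^2$ is the entrywise square, $\sqrt{v}$ the entrywise square root, and inequalities are entrywise. *)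

From mathcomp Require Import all_boot all_order all_algebra.
Set Implicit Arguments. Unset Strict Implicit. Unset Printing Implicit Defensive.
Import Order.TTheory GRing.Theory Num.Theory.
Local Open Scope ring_scope.

Definition incidence (R : ringType) (m n : nat) (src dst : 'I_m -> 'I_n)
  : 'M[R]_(m, n) :=
  \matrix_(e < m, k < n)
     (if k == src e then 1 else if k == dst e then -1 else 0).

Definition absmx (R : numDomainType) (p q : nat) (M : 'M[R]_(p, q)) : 'M[R]_(p, q) :=
  map_mx (fun x => `|x|) M.
Definition sqmx (R : ringType) (p q : nat) (M : 'M[R]_(p, q)) : 'M[R]_(p, q) :=
  map_mx (fun x => x ^+ 2) M.
Definition sqrtmx (R : rcfType) (p q : nat) (M : 'M[R]_(p, q)) : 'M[R]_(p, q) :=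
  map_mx (fun x => Num.sqrt x) M.

Definition transport_graph (m n : nat) (src dst : 'I_m -> 'I_n) (s t : 'I_n) : Prop :=
  s != t /\ (forall e, src e != dst e).

From mathcomp Require Import all_boot all_order all_algebra.
From mathcomp Require Import ring.
Import Order.TTheory GRing.Theory Num.Theory.
Local Open Scope ring_scope.

(* Write a := A u.  Every row of A has an entry of modulus 1 (at the source of
   the edge), so |F_e a_e| <= sum_k |A_ek| |F_e| |a_e|.  Exchanging the sums,
   the inner sum at node k is bounded by the Cauchy-Schwarz inequality with
   the weights |A_ek| by sqrt(sum_e |A_ek| F_e^2) sqrt(sum_e |A_ek| a_e^2),
   and the first factor is at most g_k by the capacity constraint. *)

Lemma weighted_cauchy_schwarz (R : realFieldType) (I : finType) (w x y : I -> R) :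
  (forall i, 0 <= w i) ->
  (\sum_i w i * x i * y i) ^+ 2
    <= (\sum_i w i * x i ^+ 2) * (\sum_i w i * y i ^+ 2).
Proof.
move=> w_ge0.
set A := \sum_i _ * x i ^+ 2; set B := \sum_i _ * x i * y i.
set C := \sum_i _ * y i ^+ 2.
have A_ge0 : 0 <= A by apply: sumr_ge0 => i _; rewrite mulr_ge0 ?sqr_ge0.
have C_ge0 : 0 <= C by apply: sumr_ge0 => i _; rewrite mulr_ge0 ?sqr_ge0.
have [C0 | C_neq0] := eqVneq C 0.
  have wy0 i : w i * y i = 0.
    have wy2_ge0 j : true -> 0 <= w j * y j ^+ 2 by rewrite mulr_ge0 ?sqr_ge0.
    have /eqP := @psumr_eq0P _ _ _ _ wy2_ge0 C0 i isT.
    by rewrite mulf_eq0 sqrf_eq0 => /orP[] /eqP->; rewrite ?mul0r ?mulr0.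
  have -> : B = 0 by apply: big1 => i _; rewrite mulrAC wy0 mul0r.
  by rewrite expr0n /= mulr_ge0.
have C_gt0 : 0 < C by rewrite lt_neqAle eq_sym C_neq0.
have expand c b : \sum_i w i * (c * x i - b * y i) ^+ 2
                  = c ^+ 2 * A - 2 * c * b * B + b ^+ 2 * C.
  rewrite /A /B /C !mulr_sumr -sumrB -big_split /=.
  by apply: eq_bigr => i _; ring.
have : 0 <= C * (A * C - B ^+ 2).
  suff -> : C * (A * C - B ^+ 2) = C ^+ 2 * A - 2 * C * B * B + B ^+ 2 * C.
    by rewrite -expand; apply: sumr_ge0 => i _; rewrite mulr_ge0 ?sqr_ge0.
  by ring.
by rewrite pmulr_rge0 // subr_ge0.
Qed.

Lemma weighted_cauchy_schwarz_sqrt (R : rcfType) (I : finType) (w x y : I -> R) :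
  (forall i, 0 <= w i) ->
  \sum_i w i * x i * y i
    <= Num.sqrt (\sum_i w i * x i ^+ 2) * Num.sqrt (\sum_i w i * y i ^+ 2).
Proof.
move=> w_ge0; rewrite -sqrtrM; last first.
  by apply: sumr_ge0 => i _; rewrite mulr_ge0 ?sqr_ge0.
rewrite (le_trans (ler_norm _)) // -sqrtr_sqr ler_sqrt.
  exact: weighted_cauchy_schwarz.
by rewrite mulr_ge0 //; apply: sumr_ge0 => i _; rewrite mulr_ge0 ?sqr_ge0.
Qed.

Lemma weighted_sum_norm_le (R : rcfType) (I : finType) (w x y : I -> R) (c : R) :
  (forall i, 0 <= w i) ->
  Num.sqrt (\sum_i w i * x i ^+ 2) <= c ->
  \sum_i w i * `|x i| * `|y i| <= c * Num.sqrt (\sum_i w i * y i ^+ 2).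
Proof.
move=> w_ge0 x_le.
have normK (z : R) : `|z| ^+ 2 = z ^+ 2 := real_normK (num_real z).
have := @weighted_cauchy_schwarz_sqrt _ _ w (fun i => `|x i|) (fun i => `|y i|) w_ge0.
move/le_trans; apply.
under eq_bigr do rewrite normK; under [X in _ * Num.sqrt X]eq_bigr do rewrite normK.
by rewrite ler_wpM2r ?sqrtr_ge0.
Qed.

Lemma incidence_row_norm_ge1 (R : numDomainType) (m n : nat)
    (src dst : 'I_m -> 'I_n) (e : 'I_m) :
  1 <= \sum_k `|incidence R src dst e k|.
Proof.
rewrite (bigD1 (src e)) //= mxE eqxx normr1 lerDl.
by apply: sumr_ge0 => k _; rewrite normr_ge0.
Qed.

Lemma ler_incidence_row_norm (R : realDomainType) (m n : nat)
    (src dst : 'I_m -> 'I_n) (e : 'I_m) (x : R) :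
  x <= \sum_k `|incidence R src dst e k| * `|x|.
Proof.
rewrite -mulr_suml (le_trans (ler_norm x)) // ler_peMl //.
exact: incidence_row_norm_ge1.
Qed.

Theorem proposition2 (R : rcfType) (n m : nat) (src dst : 'I_m -> 'I_n)
  (s t : 'I_n) (g : 'cV[R]_n) (F : 'cV[R]_m) (u : 'cV[R]_n) :
  transport_graph src dst s t ->
  (forall k, 0 < g k 0) ->
  (forall k, sqrtmx (absmx (incidence R src dst)^T *m sqmx F) k 0 <= g k 0) ->
  (F^T *m (incidence R src dst *m u)) 0 0
    <= (g^T *m sqrtmx (absmx (incidence R src dst)^T
                        *m sqmx (incidence R src dst *m u))) 0 0.
Proof.
move=> _ _ capacity.
set A := incidence R src dst in capacity *; set a := A *m u.
have row_norm e (x : R) : x <= \sum_k `|A e k| * `|x|.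
  exact: ler_incidence_row_norm.
clearbody A a; rewrite !mxE.
apply: (@le_trans _ _ (\sum_k \sum_e `|A e k| * `|F e 0| * `|a e 0|)).
  rewrite exchange_big; apply: ler_sum => e _; rewrite mxE.
  apply: le_trans (row_norm e (F e 0 * a e 0)) _.
  by apply: ler_sum => k _; rewrite normrM mulrA.
apply: ler_sum => k _; rewrite !mxE.
under [X in _ <= _ * Num.sqrt X]eq_bigr do rewrite !mxE.
apply: weighted_sum_norm_le => [e|]; first exact: normr_ge0.
by have := capacity k; rewrite !mxE; under eq_bigr do rewrite !mxE.
Qed.
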